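(* Let $\mathcal{G}=(G,\odot,\leq)$ be a real continuous Alo-group with $G$ an open interval of $\mathbb{R}$, and let $\tilde A=([a_{ij}^-,a_{ij}^+])$ be an $n\times n$ $[\mathcal{G}]$-reciprocal IPCM. The following are equivalent: (1) $\tilde A$ is $[\mathcal{G}]$-consistent; (2) $a_{ik}^-\odot a_{ik}^+=a_{ij}^-\odot a_{ij}^+\odot a_{jk}^-\odot a_{jk}^+$ for all $i,j,k\in\{1,\dots,n\}$; (3) $a_{ik}^-\odot a_{ik}^+=a_{ij}^-\odot a_{ij}^+\odot a_{jk}^-\odot a_{jk}^+$ for all $i<j<k$.
   Context: An Alo-group $(G,\odot,\leq)$ is an Abelian group with a weak order $\leq$ such that $a\leq b\Rightarrow a\odot c\leq b\odot c$; real means $G\subseteq\mathbb{R}$ with usual order, continuous means $\odot$ is continuous. $[G]=\{[a^-,a^+]: a^-,a^+\in G,\ a^-\leq a^+\}$; $\tilde a^{(-1)}=[(a^+)^{(-1)},(a^-)^{(-1)}]$; $\tilde a\odot_{[G]}\tilde b=\{a\odot b: a\in\tilde a,b\in\tilde b\}$. An IPCM is an $n\times n$ matrix with entries in $[G]$; $[\mathcal{G}]$-reciprocal means $\tilde a_{ji}=\tilde a_{ij}^{(-1)}$ for all $i,j$. $\tilde A$ is $[\mathcal{G}]$-consistent if $\tilde a_{ij}\odot_{[G]}\tilde a_{jk}\odot_{[G]}\tilde a_{ki}=\tilde a_{ik}\odot_{[G]}\tilde a_{kj}\odot_{[G]}\tilde a_{ji}$ for all $i,j,k\in\{1,\dots,n\}$.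 *)

From Stdlib Require Import Reals Lra.
From Coquelicot Require Import Rbar.
Open Scope R_scope.

(* A real Alo-group: a subset G of R with the usual order, an Abelian group law
   op on G (given as a function R -> R -> R, only relevant on G), a unit and an
   inverse, and order compatibility a <= b -> a op c <= b op c. *)
Record RealAloGroup := {
  carrier : R -> Prop;
  op : R -> R -> R;
  unit : R;
  inv : R -> R;
  op_closed : forall a b, carrier a -> carrier b -> carrier (op a b);
  unit_in : carrier unit;
  inv_closed : forall a, carrier a -> carrier (inv a);
  op_assoc : forall a b c, carrier a -> carrier b -> carrier c ->
    op (op a b) c = op a (op b c);
  op_comm : forall a b, carrier a -> carrier b -> op a b = op b a;
  op_unit : forall a, carrier a -> op a unit = a;
  op_inv : forall a, carrier a -> op a (inv a) = unit;
  op_mono : forall a b c, carrier a -> carrier b -> carrier c ->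
    a <= b -> op a c <= op b c
}.

Definition alo_continuous (G : RealAloGroup) : Prop :=
  forall x y, carrier G x -> carrier G y ->
  forall eps, 0 < eps -> exists delta, 0 < delta /\
    forall x' y', carrier G x' -> carrier G y' ->
      Rabs (x' - x) < delta -> Rabs (y' - y) < delta ->
      Rabs (op G x' y' - op G x y) < eps.

Definition is_open_interval (S : R -> Prop) : Prop :=
  exists a b : Rbar, forall x, S x <-> (Rbar_lt a x /\ Rbar_lt x b).

Definition ival (lo hi : R) : R -> Prop := fun x => lo <= x <= hi.

Definition in_intG (G : RealAloGroup) (lo hi : R) : Prop :=
  carrier G lo /\ carrier G hi /\ lo <= hi.

Definition setop (G : RealAloGroup) (S T : R -> Prop) : R -> Prop :=
  fun z => exists a b, S a /\ T b /\ z = op G a b.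

Definition set_eq (S T : R -> Prop) : Prop := forall x, S x <-> T x.

(* An n x n IPCM is given by lower and upper endpoint matrices lo, hi
   (indices 0..n-1). *)
Definition IPCM (G : RealAloGroup) (n : nat) (lo hi : nat -> nat -> R) : Prop :=
  forall i j, (i < n)%nat -> (j < n)%nat -> in_intG G (lo i j) (hi i j).

(* [G]-reciprocity: a_ji = a_ij^(-1) = [inv a_ij^+, inv a_ij^-] *)
Definition reciprocal (G : RealAloGroup) (n : nat) (lo hi : nat -> nat -> R) : Prop :=
  forall i j, (i < n)%nat -> (j < n)%nat ->
    lo j i = inv G (hi i j) /\ hi j i = inv G (lo i j).

Definition consistent (G : RealAloGroup) (n : nat) (lo hi : nat -> nat -> R) : Prop :=
  forall i j k, (i < n)%nat -> (j < n)%nat -> (k < n)%nat ->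
    set_eq
      (setop G (setop G (ival (lo i j) (hi i j)) (ival (lo j k) (hi j k))) (ival (lo k i) (hi k i)))
      (setop G (setop G (ival (lo i k) (hi i k)) (ival (lo k j) (hi k j))) (ival (lo j i) (hi j i))).

(* For an interval a = [a⁻, a⁺] of G write m(a) = a⁻ ⊙ a⁺.  Since G is an interval
   and ⊙ is monotone, t ↦ m(a) ⊙ t maps a⁻¹ = [(a⁺)⁻¹, (a⁻)⁻¹] onto a.  By reciprocity
   the consistency of a triple (i, j, k) compares a_ij ⊙ a_jk ⊙ a_ik⁻¹ with
   a_ik ⊙ a_jk⁻¹ ⊙ a_ij⁻¹; reflecting factor by factor, the first set is the second
   translated by m(a_ij) ⊙ m(a_jk) ⊙ m(a_ik)⁻¹, and if the two sets agree, comparing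
   their least elements shows that this translation is trivial.  So (1) ⇔ (2) says that
   m is a cocycle.  Reciprocity also gives m_ii = e and m_ji = m_ij⁻¹, and then the
   identity on increasing triples already forces m_ij = m_0i⁻¹ ⊙ m_0j for all i, j. *)

From Stdlib Require Import Reals Lra Lia.
Open Scope R_scope.

#[local] Hint Resolve op_closed inv_closed unit_in : grp.

Lemma set_eq_min (S T : R -> Prop) a b : set_eq S T ->
  S a -> (forall z, S z -> a <= z) -> T b -> (forall z, T z -> b <= z) -> a = b.
Proof.
  intros HST Sa Smin Tb Tmin.
  apply Rle_antisym; [apply Smin, HST, Tb | apply Tmin, HST, Sa].
Qed.

Section AloGroup.
Variable G : RealAloGroup.
Local Notation C := (carrier G).
Local Notation e := (unit G).
Local Notation iv := (inv G).
Local Infix "⊙" := (op G) (at level 40, left associativity).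

Lemma op_unit_l a : C a -> e ⊙ a = a.
Proof. intros; rewrite op_comm by auto with grp; apply op_unit; auto. Qed.

Lemma op_inv_l a : C a -> iv a ⊙ a = e.
Proof. intros; rewrite op_comm by auto with grp; apply op_inv; auto. Qed.

Lemma op_comm_assoc a b c : C a -> C b -> C c -> a ⊙ (b ⊙ c) = b ⊙ (a ⊙ c).
Proof.
  intros. rewrite <- !op_assoc by auto. rewrite (op_comm G a b); auto.
Qed.

Lemma op_shuffle a b c d : C a -> C b -> C c -> C d ->
  a ⊙ b ⊙ (c ⊙ d) = a ⊙ c ⊙ (b ⊙ d).
Proof.
  intros. rewrite !op_assoc by auto with grp. rewrite (op_comm_assoc b c); auto.
Qed.

Lemma op_inv_cancel_l a b : C a -> C b -> iv a ⊙ (a ⊙ b) = b.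
Proof. intros. rewrite <- op_assoc, op_inv_l, op_unit_l by auto with grp. auto. Qed.

Lemma op_cancel_l a b c : C a -> C b -> C c -> a ⊙ b = a ⊙ c -> b = c.
Proof.
  intros Ha Hb Hc H.
  rewrite <- (op_inv_cancel_l a b), <- (op_inv_cancel_l a c), H; auto.
Qed.

Lemma inv_unique a b : C a -> C b -> a ⊙ b = e -> b = iv a.
Proof.
  intros Ha Hb H. apply (op_cancel_l a); auto with grp. rewrite op_inv; auto.
Qed.

Lemma inv_op_distr a b : C a -> C b -> iv (a ⊙ b) = iv a ⊙ iv b.
Proof.
  intros. symmetry. apply inv_unique; auto with grp.
  rewrite op_shuffle, !op_inv, op_unit by auto with grp. auto.
Qed.

Lemma inv_involutive a : C a -> iv (iv a) = a.
Proof. intros. symmetry. apply inv_unique, op_inv_l; auto with grp. Qed.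

Lemma op_cross a b c d : C a -> C b -> C c -> C d ->
  a ⊙ iv b = c ⊙ iv d -> a ⊙ d = c ⊙ b.
Proof.
  intros Ha Hb Hc Hd H.
  transitivity (a ⊙ iv b ⊙ (b ⊙ d)).
  - rewrite op_assoc, op_inv_cancel_l by auto with grp. auto.
  - rewrite H, (op_comm G b d), op_assoc, op_inv_cancel_l by auto with grp. auto.
Qed.

Lemma op_mono_r a b c : C a -> C b -> C c -> b <= c -> a ⊙ b <= a ⊙ c.
Proof.
  intros. rewrite (op_comm G a b), (op_comm G a c) by auto. apply op_mono; auto.
Qed.

Lemma op_mono3 a b c a' b' c' : C a -> C b -> C c -> C a' -> C b' -> C c' ->
  a <= a' -> b <= b' -> c <= c' -> a ⊙ b ⊙ c <= a' ⊙ b' ⊙ c'.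
Proof.
  intros.
  apply Rle_trans with (a' ⊙ b ⊙ c).
  { apply op_mono, op_mono; auto with grp. }
  apply Rle_trans with (a' ⊙ b' ⊙ c).
  { apply op_mono, op_mono_r; auto with grp. }
  apply op_mono_r; auto with grp.
Qed.

Lemma inv_antitone a b : C a -> C b -> a <= b -> iv b <= iv a.
Proof.
  intros Ha Hb H.
  assert (Hab := op_mono _ a b (iv a ⊙ iv b) Ha Hb ltac:(auto with grp) H).
  rewrite <- (op_assoc G a), op_inv, op_unit_l in Hab by auto with grp.
  rewrite (op_comm_assoc b), op_inv, op_unit in Hab by auto with grp.
  exact Hab.
Qed.

Lemma setop3_incl (S1 S2 S3 T1 T2 T3 : R -> Prop) c1 c2 c3 :
  (forall t, S1 t -> C t) -> (forall t, S2 t -> C t) -> (forall t, S3 t -> C t) ->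
  C c1 -> C c2 -> C c3 -> c1 ⊙ c2 ⊙ c3 = e ->
  (forall t, S3 t -> T1 (c1 ⊙ t)) -> (forall t, S2 t -> T2 (c2 ⊙ t)) ->
  (forall t, S1 t -> T3 (c3 ⊙ t)) ->
  forall z, setop G (setop G S1 S2) S3 z -> setop G (setop G T1 T2) T3 z.
Proof.
  intros CS1 CS2 CS3 Hc1 Hc2 Hc3 Hc T1c T2c T3c z [u [w [[x [y [Hx [Hy ->]]]] [Hw ->]]]].
  apply CS1 in Hx as Cx. apply CS2 in Hy as Cy. apply CS3 in Hw as Cw.
  exists (c1 ⊙ w ⊙ (c2 ⊙ y)), (c3 ⊙ x). split; [exists (c1 ⊙ w), (c2 ⊙ y); auto |].
  split; [auto |].
  rewrite (op_shuffle c1 w c2 y), (op_shuffle (c1 ⊙ c2)), Hc, op_unit_l by auto with grp.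
  rewrite (op_comm G w y), (op_comm G (y ⊙ w) x), op_assoc by auto with grp. auto.
Qed.

Section OrderedCocycle.
Variable n : nat.
Variable m : nat -> nat -> R.
Hypothesis m_carrier : forall x y, (x < n)%nat -> (y < n)%nat -> C (m x y).
Hypothesis m_diag : forall x, (x < n)%nat -> m x x = e.
Hypothesis m_swap : forall x y, (x < n)%nat -> (y < n)%nat -> m y x = iv (m x y).
Hypothesis m_ordered : forall i j k, (i < j)%nat -> (j < k)%nat -> (k < n)%nat ->
  m i k = m i j ⊙ m j k.

Lemma cocycle_from_zero_le x y : (x <= y)%nat -> (y < n)%nat -> m 0 y = m 0 x ⊙ m x y.
Proof.
  intros Hxy Hy.
  destruct (Nat.eq_dec x y) as [<- | Hne].
  - rewrite m_diag, op_unit by (try apply m_carrier; lia). reflexivity.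
  - destruct x as [| x].
    + rewrite m_diag, op_unit_l by (try apply m_carrier; lia). reflexivity.
    + apply m_ordered; lia.
Qed.

Lemma cocycle_from_zero x y : (x < n)%nat -> (y < n)%nat -> m 0 y = m 0 x ⊙ m x y.
Proof.
  intros Hx Hy. destruct (Nat.le_gt_cases x y).
  - apply cocycle_from_zero_le; lia.
  - assert (C (m 0 y)) by (apply m_carrier; lia).
    assert (C (m x y)) by (apply m_carrier; lia).
    rewrite (cocycle_from_zero_le y x), (m_swap x y), op_assoc, op_inv_l, op_unit
      by (auto with grp || lia).
    reflexivity.
Qed.

Lemma cocycle_of_ordered i j k : (i < n)%nat -> (j < n)%nat -> (k < n)%nat ->
  m i k = m i j ⊙ m j k.
Proof.
  intros Hi Hj Hk.
  assert (C (m 0 i)) by (apply m_carrier; lia).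
  apply (op_cancel_l (m 0 i)); auto with grp.
  rewrite <- op_assoc, <- !cocycle_from_zero by auto with grp. reflexivity.
Qed.

End OrderedCocycle.

Section OpenInterval.
Hypothesis G_interval : is_open_interval C.

Lemma ival_carrier lo hi : C lo -> C hi -> forall t, ival lo hi t -> C t.
Proof.
  destruct G_interval as [l [u Hlu]]. intros Hlo Hhi t Ht.
  apply Hlu in Hlo. apply Hlu in Hhi. apply Hlu. unfold ival in Ht.
  destruct l, u; simpl in *; try tauto; lra.
Qed.

Lemma ival_reflect lo hi : C lo -> C hi ->
  forall t, ival (iv hi) (iv lo) t -> ival lo hi (lo ⊙ hi ⊙ t).
Proof.
  intros Hlo Hhi t Ht.
  assert (Ct : C t) by (apply (ival_carrier (iv hi) (iv lo)); auto with grp).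
  destruct Ht as [Ht1 Ht2]. split.
  - apply Rle_trans with (lo ⊙ hi ⊙ iv hi).
    + right. rewrite op_assoc, op_inv, op_unit by auto with grp. auto.
    + apply op_mono_r; auto with grp.
  - apply Rle_trans with (lo ⊙ hi ⊙ iv lo).
    + apply op_mono_r; auto with grp.
    + right. rewrite (op_comm G lo), op_assoc, op_inv, op_unit by auto with grp. auto.
Qed.

Lemma ival_reflect_inv lo hi : C lo -> C hi ->
  forall t, ival lo hi t -> ival (iv hi) (iv lo) (iv (lo ⊙ hi) ⊙ t).
Proof.
  intros Hlo Hhi t Ht.
  rewrite inv_op_distr, (op_comm G (iv lo)) by auto with grp.
  apply ival_reflect; auto with grp.
  rewrite !inv_involutive; auto.
Qed.

Lemma setop3_ival_min l1 h1 l2 h2 l3 h3 :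
  C l1 -> C h1 -> C l2 -> C h2 -> C l3 -> C h3 -> l1 <= h1 -> l2 <= h2 -> l3 <= h3 ->
  let S := setop G (setop G (ival l1 h1) (ival l2 h2)) (ival l3 h3) in
  S (l1 ⊙ l2 ⊙ l3) /\ forall z, S z -> l1 ⊙ l2 ⊙ l3 <= z.
Proof.
  intros Cl1 Ch1 Cl2 Ch2 Cl3 Ch3 H1 H2 H3 S. split.
  - exists (l1 ⊙ l2), l3. split; [exists l1, l2 |]; unfold ival; repeat split; auto with real.
  - intros z [u [w [[x [y [Hx [Hy ->]]]] [Hw ->]]]].
    assert (Cx := ival_carrier l1 h1 Cl1 Ch1 x Hx).
    assert (Cy := ival_carrier l2 h2 Cl2 Ch2 y Hy).
    assert (Cw := ival_carrier l3 h3 Cl3 Ch3 w Hw).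
    apply op_mono3; auto; [apply Hx | apply Hy | apply Hw].
Qed.

Lemma ival3_eq_iff la ha lb hb ld hd :
  C la -> C ha -> C lb -> C hb -> C ld -> C hd -> la <= ha -> lb <= hb -> ld <= hd ->
  set_eq
    (setop G (setop G (ival la ha) (ival lb hb)) (ival (iv hd) (iv ld)))
    (setop G (setop G (ival ld hd) (ival (iv hb) (iv lb))) (ival (iv ha) (iv la)))
  <-> ld ⊙ hd = la ⊙ ha ⊙ (lb ⊙ hb).
Proof.
  intros Cla Cha Clb Chb Cld Chd Ha Hb Hd.
  assert (Ia := inv_antitone la ha Cla Cha Ha).
  assert (Ib := inv_antitone lb hb Clb Chb Hb).
  assert (Id := inv_antitone ld hd Cld Chd Hd).
  split.
  - intros Heq.
    destruct (setop3_ival_min la ha lb hb (iv hd) (iv ld)) as [Lmin Lle];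
      auto with grp.
    destruct (setop3_ival_min ld hd (iv hb) (iv lb) (iv ha) (iv la)) as [Rmin Rle];
      auto with grp.
    assert (Hmin := set_eq_min _ _ _ _ Heq Lmin Lle Rmin Rle).
    rewrite (op_assoc G ld), <- inv_op_distr, (op_comm G hb) in Hmin by auto with grp.
    rewrite <- (op_shuffle la lb ha hb) by auto.
    symmetry. apply op_cross; auto with grp.
  - intros Hmid z. split.
    + apply setop3_incl with (ld ⊙ hd) (iv (lb ⊙ hb)) (iv (la ⊙ ha));
        try first [apply ival_carrier | apply ival_reflect | apply ival_reflect_inv];
        auto with grp.
      rewrite Hmid, (op_assoc G (la ⊙ ha) (lb ⊙ hb)), op_inv, op_unit, op_inv
        by auto with grp.
      auto.
    + apply setop3_incl with (la ⊙ ha) (lb ⊙ hb) (iv (ld ⊙ hd));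
        try first [apply ival_carrier | apply ival_reflect | apply ival_reflect_inv];
        auto with grp.
      rewrite Hmid. apply op_inv; auto with grp.
Qed.

Section Matrix.
Variable n : nat.
Variables lo hi : nat -> nat -> R.
Hypothesis HA : IPCM G n lo hi.
Hypothesis Hrec : reciprocal G n lo hi.

Lemma consistent_triple_iff i j k : (i < n)%nat -> (j < n)%nat -> (k < n)%nat ->
  set_eq
    (setop G (setop G (ival (lo i j) (hi i j)) (ival (lo j k) (hi j k))) (ival (lo k i) (hi k i)))
    (setop G (setop G (ival (lo i k) (hi i k)) (ival (lo k j) (hi k j))) (ival (lo j i) (hi j i)))
  <-> lo i k ⊙ hi i k = lo i j ⊙ hi i j ⊙ (lo j k ⊙ hi j k).
Proof.
  intros Hi Hj Hk.
  destruct (HA i j Hi Hj) as (? & ? & ?), (HA j k Hj Hk) as (? & ? & ?),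
    (HA i k Hi Hk) as (? & ? & ?).
  destruct (Hrec i j Hi Hj) as [-> ->], (Hrec j k Hj Hk) as [-> ->],
    (Hrec i k Hi Hk) as [-> ->].
  apply ival3_eq_iff; auto.
Qed.

Lemma consistent_iff_mid_cocycle :
  consistent G n lo hi <->
  forall i j k, (i < n)%nat -> (j < n)%nat -> (k < n)%nat ->
    lo i k ⊙ hi i k = lo i j ⊙ hi i j ⊙ (lo j k ⊙ hi j k).
Proof.
  split; intros H i j k Hi Hj Hk; apply consistent_triple_iff; auto.
Qed.

Lemma mid_cocycle_of_ordered :
  (forall i j k, (i < j)%nat -> (j < k)%nat -> (k < n)%nat ->
    lo i k ⊙ hi i k = lo i j ⊙ hi i j ⊙ (lo j k ⊙ hi j k)) ->
  forall i j k, (i < n)%nat -> (j < n)%nat -> (k < n)%nat ->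
    lo i k ⊙ hi i k = lo i j ⊙ hi i j ⊙ (lo j k ⊙ hi j k).
Proof.
  intros Hord.
  apply (cocycle_of_ordered n (fun x y => lo x y ⊙ hi x y)); simpl; auto.
  - intros x y Hx Hy. destruct (HA x y Hx Hy) as (? & ? & _). auto with grp.
  - intros x Hx. destruct (HA x x Hx Hx) as (? & ? & _), (Hrec x x Hx Hx) as [-> _].
    apply op_inv_l; auto.
  - intros x y Hx Hy. destruct (HA x y Hx Hy) as (? & ? & _), (Hrec x y Hx Hy) as [-> ->].
    rewrite inv_op_distr by auto. apply op_comm; auto with grp.
Qed.

End Matrix.
End OpenInterval.
End AloGroup.

Theorem theorem4 (G : RealAloGroup) (n : nat) (lo hi : nat -> nat -> R)
  (Hcont : alo_continuous G) (Hint : is_open_interval (carrier G))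
  (HA : IPCM G n lo hi) (Hrec : reciprocal G n lo hi) :
  (consistent G n lo hi <->
   (forall i j k, (i < n)%nat -> (j < n)%nat -> (k < n)%nat ->
      op G (lo i k) (hi i k) =
      op G (op G (op G (lo i j) (hi i j)) (lo j k)) (hi j k)))
  /\
  ((forall i j k, (i < n)%nat -> (j < n)%nat -> (k < n)%nat ->
      op G (lo i k) (hi i k) =
      op G (op G (op G (lo i j) (hi i j)) (lo j k)) (hi j k)) <->
   (forall i j k, (i < j)%nat -> (j < k)%nat -> (k < n)%nat ->
      op G (lo i k) (hi i k) =
      op G (op G (op G (lo i j) (hi i j)) (lo j k)) (hi j k))).
Proof.
  assert (Hassoc : forall i j k, (i < n)%nat -> (j < n)%nat -> (k < n)%nat ->
    op G (op G (op G (lo i j) (hi i j)) (lo j k)) (hi j k) =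
    op G (op G (lo i j) (hi i j)) (op G (lo j k) (hi j k))).
  { intros i j k Hi Hj Hk.
    destruct (HA i j Hi Hj) as (? & ? & _), (HA j k Hj Hk) as (? & ? & _).
    apply op_assoc; auto with grp. }
  pose proof (consistent_iff_mid_cocycle G Hint n lo hi HA Hrec) as Hcons.
  split; split.
  - intros Hc i j k Hi Hj Hk. rewrite Hassoc by auto. apply Hcons; auto.
  - intros H2. apply Hcons. intros i j k Hi Hj Hk. rewrite <- Hassoc; auto.
  - intros H2 i j k Hij Hjk Hk. apply H2; lia.
  - intros H3 i j k Hi Hj Hk. rewrite Hassoc by auto.
    apply (mid_cocycle_of_ordered G n lo hi HA Hrec); auto.
    intros i' j' k' Hij Hjk Hk'. rewrite <- Hassoc by lia. auto.
Qed.
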